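(* (i) If $K\subset\mathbb{R}^{N+1}_+$ is compact and $\mu\in\mathcal{M}_K$, then $\mathbb{P}^h_\mu(A^{-1}z)=\mathbb{P}^{\tilde h}_{A_\#\mu}(z)$ for all $z\in\mathbb{R}^{N+1}_-$, where $A_\#\mu\in\mathcal{M}_{AK}$ is the pushforward $(A_\#\mu)(E)=\mu(A^{-1}E)$. If $K\subset\mathbb{R}^{N+1}_-$ is compact and $\mu\in\mathcal{M}_K$, then $\mathbb{P}^{\tilde h}_\mu(Az)=\mathbb{P}^h_{(A^{-1})_\#\mu}(z)$ for all $z\in\mathbb{R}^{N+1}_+$, where $((A^{-1})_\#\mu)(E)=\mu(AE)$. (ii) $\lambda\in\mathcal{M}_K$ is the $h$-capacitary measure of a compact $K\subset\mathbb{R}^{N+1}_+$ if and only if $A_\#\lambda$ is the $\tilde h$-capacitary measure of $AK$. (iii) For compact $K\subset\mathbb{R}^{N+1}_+$ with $h$-capacitary measure $\lambda$, $C_{\tilde h}(AK)=\lambda(K)=C_h(K)$; for compact $K\subset\mathbb{R}^{N+1}_-$ with $\tilde h$-capacitary measure $\tilde\lambda$, $C_h(A^{-1}K)=\tilde\lambda(K)=C_{\tilde h}(K)$.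
   Context: Fix $\gamma\in\mathbb{R}^N$, $N\ge1$. $F(x,t)=(4\pi t)^{-N/2}e^{-|x|^2/(4t)}$ for $t>0$, $0$ otherwise; $F(z-w)$ is evaluated with this formula at $z-w$. $h(x,t)=F(x-\gamma,t)$, $h_*(x,t)=(\pi/t)^{N/2}e^{|x-\gamma|^2/(4t)}$ on $\mathbb{R}^{N+1}_+$; $\tilde h(x,t)=e^{\langle x,\gamma\rangle+|\gamma|^2t}$, $\tilde h_*(y,\tau)=e^{-\langle y,\gamma\rangle-|\gamma|^2\tau}$ on $\mathbb{R}^{N+1}_-$. Appell map $A(x,t)=(\frac{x}{2t},-\frac{1}{4t})$, $A^{-1}(x,t)=(-\frac{x}{2t},-\frac{1}{4t})$. For compact $K$ (in $\mathbb{R}^{N+1}_+$ or $\mathbb{R}^{N+1}_-$), $\mathcal{M}_K$ is the set of nonnegative Radon measures supported in $K$. $\mathbb{P}^h_\mu(z)=\int\frac{F(z-w)}{h(z)h_*(w)}d\mu(w)$ ($z\in\mathbb{R}^{N+1}_+$), $\mathbb{P}^{\tilde h}_\mu(z)=\int\frac{F(z-w)}{\tilde h(z)\tilde h_*(w)}d\mu(w)$ ($z\in\mathbb{R}^{N+1}_-$). $C_h(K)=\max\{\mu(K):\mu\in\mathcal{M}_K,\mathbb{P}^h_\mu\le1\text{ on }\mathbb{R}^{N+1}_+\}$ and $C_{\tilde h}(K)=\max\{\mu(K):\mu\in\mathcal{M}_K,\mathbb{P}^{\tilde h}_\mu\le1\text{ on }\mathbb{R}^{N+1}_-\}$; an $h$-capacitary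 ($\tilde h$-capacitary) measure of $K$ is a measure attaining this maximum. *)

From mathcomp Require Import all_boot all_order all_algebra.
From mathcomp Require Import all_classical all_reals all_analysis.
Import Order.TTheory GRing.Theory Num.Theory.
Import numFieldNormedType.Exports.
Set Implicit Arguments. Unset Strict Implicit. Unset Printing Implicit Defensive.
Local Open Scope classical_set_scope.
Local Open Scope ring_scope.

Definition Pt (R : realType) (N : nat) := ('rV[R]_N * R)%type.

Definition BPt (R : realType) (N : nat) := g_sigma_algebraType (@open (Pt R N)).

Notation Meas R N := {measure set (BPt R N) -> \bar R}.

Section defs.
Variables (R : realType) (N : nat).
Local Notation P := (BPt R N).

Definition sqn (x : 'rV[R]_N) : R := \sum_(i < N) (x ord0 i) ^+ 2.
Definition dotp (x y : 'rV[R]_N) : R := \sum_(i < N) x ord0 i * y ord0 i.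

Definition upper : set P := [set z | 0 < z.2].
Definition lower : set P := [set z | z.2 < 0].

Definition F (z : P) : R :=
  if 0 < z.2 then powR (4 * pi * z.2) (- (N%:R / 2)) * expR (- sqn z.1 / (4 * z.2))
  else 0.
Definition zsub (z w : P) : P := (z.1 - w.1, z.2 - w.2).

Variable gamma : 'rV[R]_N.

Definition h (z : P) : R := F (z.1 - gamma, z.2).
Definition hs (w : P) : R :=
  powR (pi / w.2) (N%:R / 2) * expR (sqn (w.1 - gamma) / (4 * w.2)).
Definition ht (z : P) : R := expR (dotp z.1 gamma + sqn gamma * z.2).
Definition hts (w : P) : R := expR (- dotp w.1 gamma - sqn gamma * w.2).

Definition A (z : P) : P := ((2 * z.2)^-1 *: z.1, - (4 * z.2)^-1).
Definition Ainv (z : P) : P := (- ((2 * z.2)^-1 *: z.1), - (4 * z.2)^-1).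

(* M_K: nonnegative (Borel, hence Radon, since finite) measures supported in K *)
Definition MK (K : set P) (mu : Meas R N) : Prop :=
  mu (~` K) = 0%E /\ (mu K < +oo)%E.

Definition Ph (mu : Meas R N) (z : P) : \bar R :=
  (\int[mu]_(w in [set: P]) (F (zsub z w) / (h z * hs w))%:E)%E.
Definition Pht (mu : Meas R N) (z : P) : \bar R :=
  (\int[mu]_(w in [set: P]) (F (zsub z w) / (ht z * hts w))%:E)%E.

Definition h_adm (K : set P) (mu : Meas R N) : Prop :=
  MK K mu /\ forall z, upper z -> (Ph mu z <= 1)%E.
Definition ht_adm (K : set P) (mu : Meas R N) : Prop :=
  MK K mu /\ forall z, lower z -> (Pht mu z <= 1)%E.

(* capacities (the maximum, written as a supremum; it is attained) *)
Definition Ch (K : set P) : \bar R :=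
  ereal_sup [set x | exists mu : Meas R N, h_adm K mu /\ x = mu K].
Definition Cht (K : set P) : \bar R :=
  ereal_sup [set x | exists mu : Meas R N, ht_adm K mu /\ x = mu K].

Definition h_capacitary (K : set P) (lam : Meas R N) : Prop :=
  h_adm K lam /\ forall mu : Meas R N, h_adm K mu -> (mu K <= lam K)%E.
Definition ht_capacitary (K : set P) (lam : Meas R N) : Prop :=
  ht_adm K lam /\ forall mu : Meas R N, ht_adm K mu -> (mu K <= lam K)%E.

End defs.

(* The Appell map A sends the upper half-space bijectively onto the lower one
   (with inverse Ainv) and transforms the heat kernel covariantly: a Gaussian
   computation shows that the kernel of the h~-potential at (z, A w) equals the
   kernel of the h-potential at (Ainv z, w).  Changing variables along A in the
   potential of a measure therefore turns it into the potential of the image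
   measure.  As A and Ainv push measures carried by K and AK to measures of
   the same mass, admissible measures correspond in both directions, hence so
   do the maximisers (capacitary measures) and the maxima (capacities). *)

From mathcomp Require Import all_boot all_order all_algebra.
From mathcomp Require Import all_classical all_reals all_analysis.
From mathcomp Require Import ring lra measurable_realfun.
Import Order.TTheory GRing.Theory Num.Theory.
Import numFieldNormedType.Exports.
Set Implicit Arguments. Unset Strict Implicit.
Local Open Scope classical_set_scope.
Local Open Scope ring_scope.

Section dot_product.
Variables (R : realType) (N : nat).
Implicit Types (a b : R) (u v w : 'rV[R]_N).

Lemma dotpC u v : dotp u v = dotp v u.
Proof. by apply: eq_bigr => i _; rewrite mulrC. Qed.

Lemma sqn_dotp u : sqn u = dotp u u.
Proof. by apply: eq_bigr => i _; rewrite expr2. Qed.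

Lemma dotpZl a u w : dotp (a *: u) w = a * dotp u w.
Proof. by rewrite /dotp mulr_sumr; apply: eq_bigr => i _; rewrite !mxE mulrA. Qed.

Lemma dotpDl u v w : dotp (u + v) w = dotp u w + dotp v w.
Proof. by rewrite /dotp -big_split; apply: eq_bigr => i _; rewrite !mxE mulrDl. Qed.

Lemma dotpZr a u w : dotp u (a *: w) = a * dotp u w.
Proof. by rewrite dotpC dotpZl dotpC. Qed.

Lemma dotpDr u v w : dotp u (v + w) = dotp u v + dotp u w.
Proof. by rewrite dotpC dotpDl !(dotpC u). Qed.

Lemma sqn_comb a b u v :
  sqn (a *: u + b *: v) = a ^+ 2 * sqn u + 2 * a * b * dotp u v + b ^+ 2 * sqn v.
Proof.
rewrite sqn_dotp !(dotpDl, dotpDr, dotpZl, dotpZr) (dotpC v u) -!sqn_dotp; ring.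
Qed.

Lemma sqnB u v : sqn (u - v) = sqn u - 2 * dotp u v + sqn v.
Proof. by rewrite -[in LHS](scale1r u) -[in LHS](scaleN1r v) sqn_comb; ring. Qed.

Lemma sqnBZr a u v : sqn (u - a *: v) = sqn u - 2 * a * dotp u v + a ^+ 2 * sqn v.
Proof. by rewrite -[in LHS](scale1r u) -[in LHS]scaleNr sqn_comb; ring. Qed.

Lemma sqnNZlB a u v : sqn (- (a *: u) - v) = a ^+ 2 * sqn u + 2 * a * dotp u v + sqn v.
Proof. by rewrite -[in LHS]scaleNr -[in LHS](scaleN1r v) sqn_comb; ring. Qed.

End dot_product.

Section appell_kernel.
Variables (R : realType) (N : nat) (gamma : 'rV[R]_N).

Lemma expR_ratio_eq (p1 p2 p3 p4 e1 e2 e3 f1 f2 f3 : R) :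
  0 < p1 -> 0 < p2 -> 0 < p3 -> 0 < p4 -> p2 * p4 = p3 * p1 ->
  e1 - e2 - e3 = f1 - f2 - f3 ->
  p1^-1 * expR e1 / (expR e2 * expR e3) =
  p2^-1 * expR f1 / (p3^-1 * expR f2 * (p4 * expR f3)).
Proof.
move=> p1_gt0 p2_gt0 p3_gt0 p4_gt0 p_eq e_eq.
have -> : e1 = f1 - f2 - f3 + e2 + e3 by rewrite -e_eq; ring.
have -> : p1 = p2 * p4 / p3 by rewrite p_eq; field; rewrite gt_eqF.
rewrite !expRD !expRN.
have := expR_gt0 f1; have := expR_gt0 f2; have := expR_gt0 f3;
have := expR_gt0 e2; have := expR_gt0 e3.
move: (expR f1) (expR f2) (expR f3) (expR e2) (expR e3) => a b c d e *.
by field; rewrite !gt_eqF.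
Qed.

Definition h_kernel (z w : BPt R N) : R := F (zsub z w) / (h gamma z * hs gamma w).
Definition ht_kernel (z w : BPt R N) : R := F (zsub z w) / (ht gamma z * hts gamma w).

Lemma appell_kernel (z w : BPt R N) : z.2 < 0 -> 0 < w.2 ->
  ht_kernel z (A w) = h_kernel (Ainv z) w.
Proof.
rewrite /ht_kernel /h_kernel; case: z => x t; case: w => y s /= t_lt0 s_gt0.
have t_neq0 : t != 0 by rewrite lt_eqF.
have s_neq0 : s != 0 by rewrite gt_eqF.
have T_gt0 : 0 < - (4 * t)^-1 by rewrite oppr_gt0 invr_lt0 pmulr_rlt0.
have s4_gt0 : 0 < 4 * s by lra.
have t4_gt0 : 0 < - 4 * t by lra.
have is_gt0 : 0 < (4 * s)^-1 by rewrite invr_gt0.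
have it_gt0 : 0 < (- 4 * t)^-1 by rewrite invr_gt0.
have pi_gt0 : 0 < pi :> R by exact: pi_gt0.
set c := 1 + 4 * t * s.
(* both time differences are [c] times a positive number, so the two kernels vanish together *)
have gap1 : t - - (4 * s)^-1 = c / (4 * s) by rewrite /c; field.
have gap2 : - (4 * t)^-1 - s = c / (- 4 * t) by rewrite /c; field.
rewrite /h /hs /F /zsub /A /Ainv /ht /hts /= gap1 gap2 T_gt0.
rewrite (pmulr_lgt0 _ is_gt0) (pmulr_lgt0 _ it_gt0).
case: (boolP (0 < c)) => [c_gt0|_]; last by rewrite !mul0r.
rewrite !powRN; apply: expR_ratio_eq; rewrite ?powR_gt0 ?mulr_gt0 ?invr_gt0 //.
- rewrite -!powRM ?ltW ?mulr_gt0 ?invr_gt0 //; congr (_ `^ _).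
  by rewrite /c; field; rewrite s_neq0.
- rewrite !sqnBZr !sqnNZlB !sqnB !dotpZl /c; field.
  by rewrite s_neq0 t_neq0 -/c gt_eqF.
Qed.

End appell_kernel.

Section appell_map.
Variables (R : realType) (N : nat).
Local Notation P := (BPt R N).
Local Notation A := (@A R N).
Local Notation Ainv := (@Ainv R N).
Local Notation upper := (@upper R N).
Local Notation lower := (@lower R N).
Implicit Types (z w : P) (K : set P).

Lemma upper_neq0 z : upper z -> z.2 != 0.
Proof. by move=> z_gt0; rewrite gt_eqF. Qed.

Lemma lower_neq0 z : lower z -> z.2 != 0.
Proof. by move=> z_lt0; rewrite lt_eqF. Qed.

Lemma A_Ainv z : z.2 != 0 -> A (Ainv z) = z.
Proof.
case: z => x t /= t_neq0; rewrite /A /Ainv /=; congr (_, _); last by field.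
by rewrite scalerN -scaleNr scalerA -[RHS]scale1r; congr (_ *: _); field.
Qed.

Lemma Ainv_A z : z.2 != 0 -> Ainv (A z) = z.
Proof.
case: z => x t /= t_neq0; rewrite /A /Ainv /=; congr (_, _); last by field.
by rewrite -scaleNr scalerA -[RHS]scale1r; congr (_ *: _); field.
Qed.

Lemma lower_A z : upper z -> lower (A z).
Proof. by rewrite /upper /lower /= => t_gt0; rewrite oppr_lt0 invr_gt0 mulr_gt0. Qed.

Lemma upper_Ainv z : lower z -> upper (Ainv z).
Proof. by rewrite /upper /lower /= => t_lt0; rewrite oppr_gt0 invr_lt0 pmulr_rlt0. Qed.

Lemma A_time0 z : z.2 = 0 -> A z = (0, 0).
Proof. by case: z => x t /= ->; rewrite /A /= !mulr0 invr0 scale0r oppr0. Qed.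

Lemma Ainv_time0 z : z.2 = 0 -> Ainv z = (0, 0).
Proof. by case: z => x t /= ->; rewrite /Ainv /= !mulr0 invr0 scale0r !oppr0. Qed.

Lemma A_time_eq0 w : (A w).2 = 0 -> w.2 = 0.
Proof.
rewrite /A /= => /eqP; rewrite oppr_eq0 invr_eq0 mulf_eq0 pnatr_eq0 /=.
exact: eqP.
Qed.

Lemma image_A_iff (E : set P) z : z.2 != 0 -> (A @` E) z <-> E (Ainv z).
Proof.
move=> z_neq0; split => [[w Ew wz]|Ez]; last by exists (Ainv z); rewrite ?A_Ainv.
move: z_neq0; rewrite -wz => Aw_neq0.
by rewrite Ainv_A //; apply: contra_neq Aw_neq0 => /A_time0 ->.
Qed.

Lemma image_A_lower K : K `<=` upper -> A @` K `<=` lower.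
Proof. by move=> Kup _ [w Kw <-]; apply/lower_A/Kup. Qed.

Lemma image_Ainv_upper K : K `<=` lower -> Ainv @` K `<=` upper.
Proof. by move=> Klo _ [w Kw <-]; apply/upper_Ainv/Klo. Qed.

Lemma Ainv_image_A K : K `<=` upper -> Ainv @` (A @` K) = K.
Proof.
move=> Kup; apply/seteqP; split => [_ [_ [w Kw <-] <-]|z Kz].
  by rewrite Ainv_A // (upper_neq0 (Kup _ _)).
by exists (A z); [exists z | rewrite Ainv_A // (upper_neq0 (Kup _ _))].
Qed.

Lemma A_image_Ainv K : K `<=` lower -> A @` (Ainv @` K) = K.
Proof.
move=> Klo; apply/seteqP; split => [_ [_ [w Kw <-] <-]|z Kz].
  by rewrite A_Ainv // (lower_neq0 (Klo _ _)).
by exists (Ainv z); [exists z | rewrite A_Ainv // (lower_neq0 (Klo _ _))].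
Qed.

Lemma time_inv_continuous (k : R) (z : Pt R N) : k != 0 -> z.2 != 0 ->
  {for z, continuous (fun w : Pt R N => (k * w.2)^-1)}.
Proof.
move=> k_neq0 z_neq0; apply: cvgV; first by rewrite mulf_neq0.
by apply: continuousM; [exact: cst_continuous | exact: cvg_snd].
Qed.

Lemma A_continuous (z : Pt R N) : z.2 != 0 -> {for z, continuous A}.
Proof.
move=> z_neq0.
have cvg1 : (fun w : Pt R N => (2 * w.2)^-1 *: w.1) @ z --> (2 * z.2)^-1 *: z.1.
  by apply: cvgZ; [apply: time_inv_continuous | exact: cvg_fst].
have cvg2 : (fun w : Pt R N => - (4 * w.2)^-1) @ z --> - (4 * z.2)^-1.
  by apply: cvgN; apply: time_inv_continuous.
exact: cvg_pair cvg1 cvg2.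
Qed.

Lemma Ainv_continuous (z : Pt R N) : z.2 != 0 -> {for z, continuous Ainv}.
Proof.
move=> z_neq0.
have cvg1 : (fun w : Pt R N => - ((2 * w.2)^-1 *: w.1)) @ z --> - ((2 * z.2)^-1 *: z.1).
  by apply: cvgN; apply: cvgZ; [apply: time_inv_continuous | exact: cvg_fst].
have cvg2 : (fun w : Pt R N => - (4 * w.2)^-1) @ z --> - (4 * z.2)^-1.
  by apply: cvgN; apply: time_inv_continuous.
exact: cvg_pair cvg1 cvg2.
Qed.

End appell_map.

Lemma measurable_invr (R : realType) : measurable_fun [set: R] (@GRing.inv R).
Proof.
have nz_pre : (fun x : R => x != 0) @^-1` [set true] = ~` [set 0].
  by apply/seteqP; split => x /=; case: eqP.
have -> : @GRing.inv R = fun x => if x != 0 then x^-1 else 0.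
  by apply/funext => x; case: eqP => // ->; rewrite invr0.
apply: measurable_fun_if => //.
- apply: (measurable_fun_bool true); rewrite setTI nz_pre; exact/measurableC.
- apply: open_continuous_measurable_fun.
    rewrite setTI nz_pre; apply/closed_openC/accessible_closed_set1.
    exact/hausdorff_accessible/Rhausdorff.
  by move=> x; rewrite inE /= => -[_ x_neq0]; exact: inv_continuous.
Qed.

Section borel.
Variables (R : realType) (N : nat).
Local Notation P := (BPt R N).
Local Notation A := (@A R N).
Local Notation Ainv := (@Ainv R N).

Lemma closed_measurable_Pt (C : set P) : closed (C : set (Pt R N)) -> measurable C.
Proof.
by move=> /closed_openC C_open; rewrite -(setCK C); apply: measurableC; exact: sub_sigma_algebra.
Qed.

Lemma compact_measurable_Pt (K : set P) : compact (K : set (Pt R N)) -> measurable K.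
Proof.
by move=> /compact_closed K_closed; apply: closed_measurable_Pt; apply: K_closed; exact: norm_hausdorff.
Qed.

Lemma measurable_set1_Pt (x : P) : measurable [set x].
Proof.
apply: closed_measurable_Pt; apply: accessible_closed_set1; apply: hausdorff_accessible.
exact: norm_hausdorff.
Qed.

Lemma continuous_measurable_fun_Pt (f : Pt R N -> R) :
  continuous f -> measurable_fun [set: P] f.
Proof.
move=> /continuousP f_cont; apply: (measurability _ (RGenOpens.measurableE R)).
move=> _ [_ [a [b ->] <-]]; rewrite setTI.
by apply: sub_sigma_algebra; apply: f_cont; exact: interval_open.
Qed.

Lemma measurable_time : measurable_fun [set: P] (fun w : P => w.2).
Proof. by apply: continuous_measurable_fun_Pt => w; exact: cvg_snd. Qed.

Lemma measurable_coord (i : 'I_N) : measurable_fun [set: P] (fun w : P => w.1 ord0 i).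
Proof.
apply: continuous_measurable_fun_Pt => w.
apply: (@continuous_comp _ _ _ fst (fun M : 'rV[R]_N => M ord0 i)).
  exact: cvg_fst.
exact: coord_continuous.
Qed.

Lemma open_time_neq0 : open [set z : Pt R N | z.2 != 0].
Proof.
have -> : [set z : Pt R N | z.2 != 0] = (fun z : Pt R N => z.2) @^-1` (~` [set 0]).
  by apply/seteqP; split => z /=; case: eqP.
apply: (proj1 (continuousP _)); first by move=> w; exact: cvg_snd.
by apply/closed_openC/accessible_closed_set1/hausdorff_accessible; exact: Rhausdorff.
Qed.

Lemma measurable_fun_continuous_off (O : set (Pt R N)) (f : Pt R N -> Pt R N) (c : Pt R N) :
  open O -> (forall z, O z -> {for z, continuous f}) -> (forall z, ~ O z -> f z = c) ->
  measurable_fun [set: P] (f : P -> P).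
Proof.
move=> O_open f_cont f_cst.
apply: (@measurability _ _ P P setT f open) => // _ [U U_open <-].
have -> : [set: P] `&` f @^-1` U = (O `&` f @^-1` U) `|` (~` O `&` f @^-1` U).
  by rewrite -setIUl setUCr setTI.
apply: measurableU.
  apply: sub_sigma_algebra; rewrite openE => z [Oz Ufz].
  apply: filterI; first exact: open_nbhs_nbhs.
  exact/f_cont/open_nbhs_nbhs.
have O_meas : measurable (O : set P) by exact: sub_sigma_algebra.
have [Uc|Uc] := pselect (U c).
  have -> : ~` O `&` f @^-1` U = ~` O by apply/setIidl => z /f_cst; rewrite /preimage /= => ->.
  exact: measurableC.
suff -> : ~` O `&` f @^-1` U = set0 by [].
by apply/seteqP; split => // z [/f_cst]; rewrite /preimage /= => ->.
Qed.

Lemma measurable_A : measurable_fun [set: P] A.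
Proof.
apply: (measurable_fun_continuous_off (c := (0, 0)) open_time_neq0); first exact: A_continuous.
by move=> z /negP; rewrite negbK => /eqP; exact: A_time0.
Qed.

Lemma measurable_Ainv : measurable_fun [set: P] Ainv.
Proof.
apply: (measurable_fun_continuous_off (c := (0, 0)) open_time_neq0); first exact: Ainv_continuous.
by move=> z /negP; rewrite negbK => /eqP; exact: Ainv_time0.
Qed.

Lemma measurable_image_A (E : set P) : measurable E -> measurable (A @` E).
Proof.
move=> E_meas.
have nz_meas : measurable ([set z : Pt R N | z.2 != 0] : set P).
  exact: sub_sigma_algebra open_time_neq0.
have pre_meas : measurable (Ainv @^-1` E `&` [set z : Pt R N | z.2 != 0]).
  by apply: measurableI => //; rewrite -[X in measurable X]setTI; exact: measurable_Ainv.
(* off [t = 0], [A] is inverted by [Ainv]; since [x / 0 = 0], [A] maps [t = 0] to the origin *)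
have [[w0 [Ew0 w00]]|E_off0] := pselect (exists w : P, E w /\ w.2 = 0).
  suff -> : A @` E = (Ainv @^-1` E `&` [set z : Pt R N | z.2 != 0]) `|` [set ((0, 0) : P)].
    by apply: measurableU => //; exact: measurable_set1_Pt.
  apply/seteqP; split => [z [w Ew wz]|z [[Ez z_neq0]|/= ->]].
  - have [z0|z_neq0] := eqVneq z.2 0.
      by right; rewrite /= -wz A_time0 //; apply: A_time_eq0; rewrite wz.
    by left; split => //; apply/image_A_iff => //; exists w.
  - exact/image_A_iff.
  - by exists w0 => //; rewrite A_time0.
suff -> : A @` E = Ainv @^-1` E `&` [set z : Pt R N | z.2 != 0] by [].
apply/seteqP; split => [z [w Ew wz]|z [Ez z_neq0]]; last exact/image_A_iff.
have [z0|z_neq0] := eqVneq z.2 0.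
  by exfalso; apply: E_off0; exists w; split => //; apply: A_time_eq0; rewrite wz.
by split => //; apply/image_A_iff => //; exists w.
Qed.

End borel.

Section kernel_measurability.
Variables (R : realType) (N : nat) (gamma : 'rV[R]_N).
Local Notation P := (BPt R N).

Lemma measurable_sqn (g : P -> 'rV[R]_N) :
  (forall i, measurable_fun [set: P] (fun w => g w ord0 i)) ->
  measurable_fun [set: P] (fun w => sqn (g w)).
Proof. by move=> g_meas; apply: measurable_sum => i; exact: measurable_funX. Qed.

Lemma measurable_dotp (g : P -> 'rV[R]_N) (c : 'rV[R]_N) :
  (forall i, measurable_fun [set: P] (fun w => g w ord0 i)) ->
  measurable_fun [set: P] (fun w => dotp (g w) c).
Proof.
move=> g_meas; apply: measurable_sum => i.
by apply: measurable_funM => //; exact: measurable_cst.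
Qed.

Lemma measurable_F_zsub (z : P) : measurable_fun [set: P] (fun w => F (zsub z w)).
Proof.
have time_meas : measurable_fun [set: P] (fun w : P => z.2 - w.2).
  by apply: measurable_funB; [exact: measurable_cst | exact: measurable_time].
rewrite /F /zsub /=; apply: measurable_fun_ifT; last exact: measurable_cst.
  by apply: measurable_fun_ltr => //; exact: measurable_cst.
apply: measurable_funM.
  apply: (measurableT_comp (measurable_powR _)).
  by apply: measurable_funM => //; exact: measurable_cst.
apply: (measurableT_comp (@measurable_expR R)); apply: measurable_funM.
  apply: measurable_funN; apply: measurable_sqn => i; under eq_fun do rewrite !mxE.
  by apply: measurable_funB; [exact: measurable_cst | exact: measurable_coord].
apply: (measurableT_comp (@measurable_invr R)).
by apply: measurable_funM => //; exact: measurable_cst.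
Qed.

Lemma measurable_hs : measurable_fun [set: P] (hs gamma).
Proof.
rewrite /hs; apply: measurable_funM.
  apply: (measurableT_comp (measurable_powR _)).
  apply: measurable_funM; first exact: measurable_cst.
  exact: measurableT_comp (@measurable_invr R) (@measurable_time R N).
apply: (measurableT_comp (@measurable_expR R)); apply: measurable_funM.
  apply: measurable_sqn => i; under eq_fun do rewrite !mxE.
  by apply: measurable_funB; [exact: measurable_coord | exact: measurable_cst].
apply: (measurableT_comp (@measurable_invr R)).
by apply: measurable_funM; [exact: measurable_cst | exact: measurable_time].
Qed.

Lemma measurable_hts : measurable_fun [set: P] (hts gamma).
Proof.
rewrite /hts; apply: (measurableT_comp (@measurable_expR R)).
apply: measurable_funB.
  by apply: measurable_funN; apply: measurable_dotp => i; exact: measurable_coord.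
by apply: measurable_funM; [exact: measurable_cst | exact: measurable_time].
Qed.

Lemma measurable_h_kernel (z : P) : measurable_fun [set: P] (fun w => (h_kernel gamma z w)%:E).
Proof.
apply/measurable_EFinP; apply: measurable_funM; first exact: measurable_F_zsub.
apply: (measurableT_comp (@measurable_invr R)).
by apply: measurable_funM; [exact: measurable_cst | exact: measurable_hs].
Qed.

Lemma measurable_ht_kernel (z : P) : measurable_fun [set: P] (fun w => (ht_kernel gamma z w)%:E).
Proof.
apply/measurable_EFinP; apply: measurable_funM; first exact: measurable_F_zsub.
apply: (measurableT_comp (@measurable_invr R)).
by apply: measurable_funM; [exact: measurable_cst | exact: measurable_hts].
Qed.

Lemma F_ge0 (z : P) : 0 <= F z.
Proof. by rewrite /F; case: ifP => // _; rewrite mulr_ge0 ?powR_ge0 ?expR_ge0. Qed.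

Lemma h_kernel_ge0 (z w : P) : 0 <= h_kernel gamma z w.
Proof. by rewrite divr_ge0 ?mulr_ge0 ?F_ge0 ?powR_ge0 ?expR_ge0. Qed.

Lemma ht_kernel_ge0 (z w : P) : 0 <= ht_kernel gamma z w.
Proof. by rewrite divr_ge0 ?mulr_ge0 ?F_ge0 ?expR_ge0. Qed.

End kernel_measurability.

Lemma compact_image (T U : topologicalType) (f : T -> U) (K : set T) :
  (forall z, K z -> {for z, continuous f}) -> compact K -> compact (f @` K).
Proof.
move=> f_cont K_cpt; apply: continuous_compact => //.
by apply: continuous_in_subspaceT => z /[!inE] /f_cont.
Qed.

Section measure_support.
Variables (R : realType) (N : nat).
Local Notation P := (BPt R N).
Local Open Scope ereal_scope.

(* The library's measure structure on [pushforward mu f] is parameterised by the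
   proof [mf], which canonical structure inference cannot supply. *)
Definition pushforward_measure (mu : Meas R N) (f : P -> P)
    (mf : measurable_fun [set: P] f) : Meas R N.
Proof. refine (pushforward mu f : Meas R N); exact: mf. Defined.

Lemma measure_support (mu : Meas R N) (K S : set P) :
  measurable K -> measurable S -> mu (~` K) = 0 -> mu S = mu (S `&` K).
Proof.
move=> K_meas S_meas muK0.
rewrite (measureDI _ S_meas K_meas) (@subset_measure0 _ _ _ _ _ (~` K)) ?add0e //.
- exact: measurableD.
- exact: measurableC.
Qed.

Lemma measure_support_eq (mu : Meas R N) (K S T : set P) :
  measurable K -> measurable S -> measurable T -> mu (~` K) = 0 ->
  S `&` K = T `&` K -> mu S = mu T.
Proof.
move=> K_meas S_meas T_meas muK0 SKT.
by rewrite (measure_support K_meas S_meas) // (measure_support K_meas T_meas) // SKT.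
Qed.

Lemma pushforward_mass (f : P -> P) (mf : measurable_fun [set: P] f) (K : set P)
    (mu nu : Meas R N) :
  measurable K -> measurable (f @` K) -> mu (~` K) = 0 ->
  (forall E, measurable E -> nu E = mu (f @^-1` E)) -> nu (f @` K) = mu K.
Proof.
move=> K_meas fK_meas muK0 nuE; rewrite nuE //.
apply: (measure_support_eq K_meas) => //.
  by rewrite -[X in measurable X]setTI; exact: mf.
by apply/seteqP; split => [z [_ Kz]|z [Kz _]]; split => //; exists z.
Qed.

Lemma MK_pushforward (f : P -> P) (mf : measurable_fun [set: P] f) (K : set P)
    (mu nu : Meas R N) :
  compact (K : set (Pt R N)) ->
  (forall z, K z -> {for z, continuous (f : Pt R N -> Pt R N)}) ->
  MK K mu -> (forall E, measurable E -> nu E = mu (f @^-1` E)) -> MK (f @` K) nu.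
Proof.
move=> K_cpt f_cont [muK0 muK_fin] nuE.
have K_meas := compact_measurable_Pt K_cpt.
have fK_meas : measurable (f @` K).
  by apply: compact_measurable_Pt; exact: compact_image.
split; last by rewrite (pushforward_mass mf K_meas fK_meas muK0 nuE).
rewrite nuE; last exact: measurableC.
apply: (subset_measure0 _ _ _ muK0).
- by rewrite -[X in measurable X]setTI; apply: mf => //; exact: measurableC.
- exact: measurableC.
- by move=> w /= fw_notin Kw; apply: fw_notin; exists w.
Qed.

Lemma integral_pushforward_support (f : P -> P) (mf : measurable_fun [set: P] f)
    (K : set P) (mu nu : Meas R N) (g1 g2 : P -> R) :
  measurable K -> mu (~` K) = 0 -> (forall E, measurable E -> nu E = mu (f @^-1` E)) ->
  measurable_fun [set: P] (fun w => (g1 w)%:E) ->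
  measurable_fun [set: P] (fun w => (g2 w)%:E) ->
  (forall w, (0 <= g1 w)%R) -> (forall w, K w -> g1 (f w) = g2 w) ->
  \int[nu]_(w in [set: P]) (g1 w)%:E = \int[mu]_(w in [set: P]) (g2 w)%:E.
Proof.
move=> K_meas muK0 nuE g1_meas g2_meas g1_ge0 g12.
transitivity (\int[pushforward mu f]_(w in [set: P]) (g1 w)%:E).
  by apply: eq_measure_integral => E E_meas _; rewrite nuE.
rewrite (ge0_integral_pushforward mf) //; last by move=> w _; rewrite lee_fin.
rewrite preimage_setT; apply: ae_eq_integral => //.
- exact: measurableT_comp.
- exists (~` K); split => //; first exact: measurableC.
  by move=> w /= neq Kw; apply: neq => _; rewrite /= g12.
Qed.

End measure_support.

Lemma maximizer_transfer d (O : porderType d) (X Y : Type) (P : X -> Prop) (Q : Y -> Prop)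
    (v : X -> O) (w : Y -> O) (g : Y -> X) (x0 : X) (y0 : Y) :
  (P x0 -> Q y0) -> v x0 = w y0 -> (forall y, Q y -> P (g y) /\ (w y <= v (g y))%O) ->
  P x0 /\ (forall x, P x -> (v x <= v x0)%O) -> Q y0 /\ (forall y, Q y -> (w y <= w y0)%O).
Proof.
move=> PQ vw gQ [Px0 x0_max]; split=> [|y /gQ [/x0_max le_g le_y]]; first exact: PQ.
by rewrite -vw (le_trans le_y).
Qed.

Lemma ereal_sup_max (R : realType) (S : set \bar R) (x : \bar R) :
  S x -> ubound S x -> ereal_sup S = x.
Proof. by move=> Sx x_ub; apply/eqP; rewrite eq_le ge_ereal_sup // ereal_sup_ubound. Qed.

Section appell_potentials.
Variables (R : realType) (N : nat) (gamma : 'rV[R]_N).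
Local Notation P := (BPt R N).
Local Notation A := (@A R N).
Local Notation Ainv := (@Ainv R N).
Local Notation upper := (@upper R N).
Local Notation lower := (@lower R N).
Local Open Scope ereal_scope.

Lemma compact_image_A (K : set P) :
  compact (K : set (Pt R N)) -> K `<=` upper -> compact (A @` K : set (Pt R N)).
Proof. by move=> K_cpt Kup; apply: compact_image K_cpt => z /Kup/upper_neq0/A_continuous. Qed.

Lemma compact_image_Ainv (K : set P) :
  compact (K : set (Pt R N)) -> K `<=` lower -> compact (Ainv @` K : set (Pt R N)).
Proof. by move=> K_cpt Klo; apply: compact_image K_cpt => z /Klo/lower_neq0/Ainv_continuous. Qed.

Lemma appell_potential_upper (K : set P) (mu nu : Meas R N) :
  compact (K : set (Pt R N)) -> K `<=` upper -> MK K mu ->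
  (forall E, measurable E -> nu E = mu (A @^-1` E)) ->
  MK (A @` K) nu /\ forall z, lower z -> Ph gamma mu (Ainv z) = Pht gamma nu z.
Proof.
move=> K_cpt Kup muK nuE; split.
  by apply: (MK_pushforward (@measurable_A R N) K_cpt _ muK nuE) => z /Kup/upper_neq0/A_continuous.
move=> z z_lo; apply/esym.
apply: (integral_pushforward_support (@measurable_A R N) (compact_measurable_Pt K_cpt) muK.1 nuE).
- exact: measurable_ht_kernel.
- exact: measurable_h_kernel.
- exact: ht_kernel_ge0.
- by move=> w Kw; apply: appell_kernel => //; exact: Kup.
Qed.

Lemma appell_potential_lower (K : set P) (mu nu : Meas R N) :
  compact (K : set (Pt R N)) -> K `<=` lower -> MK K mu ->
  (forall E, measurable E -> nu E = mu (Ainv @^-1` E)) ->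
  MK (Ainv @` K) nu /\ forall z, upper z -> Pht gamma mu (A z) = Ph gamma nu z.
Proof.
move=> K_cpt Klo muK nuE; split.
  by apply: (MK_pushforward (@measurable_Ainv R N) K_cpt _ muK nuE) => z /Klo/lower_neq0/Ainv_continuous.
move=> z z_up; apply/esym.
apply: (integral_pushforward_support (@measurable_Ainv R N) (compact_measurable_Pt K_cpt) muK.1 nuE).
- exact: measurable_h_kernel.
- exact: measurable_ht_kernel.
- exact: h_kernel_ge0.
- move=> w Kw; have w_lo := Klo _ Kw.
  have := appell_kernel gamma (lower_A z_up) (upper_Ainv w_lo).
  by rewrite A_Ainv ?lower_neq0 // Ainv_A ?upper_neq0.
Qed.

Lemma image_A_measure (K : set P) (mu : Meas R N) (E : set P) :
  measurable K -> K `<=` lower -> mu (~` K) = 0 -> measurable E ->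
  mu (A @` E) = mu (Ainv @^-1` E).
Proof.
move=> K_meas Klo muK0 E_meas.
apply: (measure_support_eq K_meas) => //; first exact: measurable_image_A.
  by rewrite -[X in measurable X]setTI; exact: (@measurable_Ainv R N).
by apply/seteqP; split => z [Ez Kz]; split => //; apply/image_A_iff => //;
  exact/lower_neq0/Klo.
Qed.

Lemma image_A_mass (K : set P) (mu nu : Meas R N) :
  compact (K : set (Pt R N)) -> K `<=` upper -> MK K mu ->
  (forall E, measurable E -> nu E = mu (A @^-1` E)) -> nu (A @` K) = mu K.
Proof.
move=> K_cpt Kup muK; apply: (pushforward_mass (@measurable_A R N)) muK.1.
  exact: compact_measurable_Pt.
by apply: compact_measurable_Pt; exact: compact_image_A.
Qed.

Lemma image_Ainv_mass (K : set P) (mu nu : Meas R N) :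
  compact (K : set (Pt R N)) -> K `<=` lower -> MK K mu ->
  (forall E, measurable E -> nu E = mu (Ainv @^-1` E)) -> nu (Ainv @` K) = mu K.
Proof.
move=> K_cpt Klo muK; apply: (pushforward_mass (@measurable_Ainv R N)) muK.1.
  exact: compact_measurable_Pt.
by apply: compact_measurable_Pt; exact: compact_image_Ainv.
Qed.

Lemma h_adm_iff (K : set P) (lam nu : Meas R N) :
  compact (K : set (Pt R N)) -> K `<=` upper -> MK K lam ->
  (forall E, measurable E -> nu E = lam (A @^-1` E)) ->
  h_adm gamma K lam <-> ht_adm gamma (A @` K) nu.
Proof.
move=> K_cpt Kup lamK nuE; have [nuAK PhE] := appell_potential_upper K_cpt Kup lamK nuE.
split=> [[_ Ph_le1]|[_ Pht_le1]]; split=> // z z_half.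
  by rewrite -PhE //; apply/Ph_le1/upper_Ainv.
by rewrite -(Ainv_A (upper_neq0 z_half)) PhE; [apply/Pht_le1/lower_A | exact: lower_A].
Qed.

Lemma ht_adm_pull (K : set P) (mu nu : Meas R N) :
  compact (K : set (Pt R N)) -> K `<=` upper -> ht_adm gamma (A @` K) mu ->
  (forall E, measurable E -> nu E = mu (Ainv @^-1` E)) -> h_adm gamma K nu.
Proof.
move=> K_cpt Kup [muAK Pht_le1] nuE.
have [nuK PhE] := appell_potential_lower (compact_image_A K_cpt Kup) (image_A_lower Kup) muAK nuE.
split; first by rewrite -(Ainv_image_A Kup).
by move=> z z_up; rewrite -PhE //; apply/Pht_le1/lower_A.
Qed.

Lemma h_capacitary_A (K : set P) (lam nu : Meas R N) :
  compact (K : set (Pt R N)) -> K `<=` upper -> MK K lam ->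
  (forall E, measurable E -> nu E = lam (A @^-1` E)) ->
  h_capacitary gamma K lam <-> ht_capacitary gamma (A @` K) nu.
Proof.
move=> K_cpt Kup lamK nuE; have lam_adm := h_adm_iff K_cpt Kup lamK nuE.
have lam_mass := image_A_mass K_cpt Kup lamK nuE.
split=> [lam_cap|nu_cap].
- apply: (maximizer_transfer (P := h_adm gamma K) (Q := ht_adm gamma (A @` K))
    (v := fun mu : Meas R N => mu K) (w := fun mu : Meas R N => mu (A @` K))
    (g := fun mu => pushforward_measure mu (@measurable_Ainv R N))
    lam_adm.1 (esym lam_mass) _ lam_cap).
  move=> mu mu_adm; split; first exact: (ht_adm_pull K_cpt Kup mu_adm).
  rewrite -[in leRHS](Ainv_image_A Kup) (image_Ainv_mass _ _ mu_adm.1) ?lexx //.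
  + exact: compact_image_A.
  + exact: image_A_lower.
- apply: (maximizer_transfer (P := ht_adm gamma (A @` K)) (Q := h_adm gamma K)
    (v := fun mu : Meas R N => mu (A @` K)) (w := fun mu : Meas R N => mu K)
    (g := fun mu => pushforward_measure mu (@measurable_A R N))
    lam_adm.2 lam_mass _ nu_cap).
  move=> mu mu_adm; have muK := mu_adm.1.
  pose nu' := pushforward_measure mu (@measurable_A R N).
  split; first exact: (h_adm_iff K_cpt Kup muK (nu := nu') (fun _ _ => erefl)).1.
  by rewrite (image_A_mass (nu := nu') K_cpt Kup muK (fun _ _ => erefl)) lexx.
Qed.

Lemma ht_capacitary_Ainv (K : set P) (lam : Meas R N) :
  compact (K : set (Pt R N)) -> K `<=` lower -> ht_capacitary gamma K lam ->
  h_capacitary gamma (Ainv @` K) (pushforward_measure lam (@measurable_Ainv R N)).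
Proof.
move=> K_cpt Klo lam_cap; have lamK := lam_cap.1.1.
have K_meas := compact_measurable_Pt K_cpt.
have AiK_cpt := compact_image_Ainv K_cpt Klo.
have AiKup := image_Ainv_upper Klo.
have AiK_MK : MK (Ainv @` K) (pushforward_measure lam (@measurable_Ainv R N)).
  by apply: (MK_pushforward (@measurable_Ainv R N) K_cpt _ lamK) => // z /Klo/lower_neq0/Ainv_continuous.
apply/(h_capacitary_A AiK_cpt AiKup AiK_MK (nu := lam)); last by rewrite A_image_Ainv.
(* [lam] is the image of its own image under [Ainv], as [A \o Ainv] is the identity on [K] *)
move=> E E_meas; apply: (measure_support_eq K_meas) => //.
- rewrite -[X in measurable X]setTI; apply: (@measurable_Ainv R N) => //.
  by rewrite -[X in measurable X]setTI; exact: (@measurable_A R N).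
- exact: lamK.1.
- apply/seteqP; split=> z [Ez Kz]; have z_neq0 := lower_neq0 (Klo _ Kz);
    by split=> //; move: Ez; rewrite /preimage /= A_Ainv.
Qed.

Lemma Ch_capacitary (K : set P) (lam : Meas R N) :
  h_capacitary gamma K lam -> Ch gamma K = lam K.
Proof.
move=> [lam_adm lam_max]; apply: ereal_sup_max; first by exists lam.
by move=> _ [mu [/lam_max mu_le ->]].
Qed.

Lemma Cht_capacitary (K : set P) (lam : Meas R N) :
  ht_capacitary gamma K lam -> Cht gamma K = lam K.
Proof.
move=> [lam_adm lam_max]; apply: ereal_sup_max; first by exists lam.
by move=> _ [mu [/lam_max mu_le ->]].
Qed.

End appell_potentials.

Unset Implicit Arguments. Set Strict Implicit.
Theorem lemma4p2 (R : realType) (N : nat) (hN : (0 < N)%N) (gamma : 'rV[R]_N) :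
  (* (i), first half *)
  (forall (K : set (BPt R N)) (mu : Meas R N),
      compact (K : set (Pt R N)) -> K `<=` @upper R N -> MK K mu ->
      forall nu : Meas R N,
        (forall E, measurable E -> nu E = mu ((@A R N) @^-1` E)) ->
        MK ((@A R N) @` K) nu /\
        forall z, @lower R N z -> Ph gamma mu (Ainv z) = Pht gamma nu z) /\
  (* (i), second half *)
  (forall (K : set (BPt R N)) (mu : Meas R N),
      compact (K : set (Pt R N)) -> K `<=` @lower R N -> MK K mu ->
      forall nu : Meas R N,
        (forall E, measurable E -> nu E = mu ((@A R N) @` E)) ->
        MK ((@Ainv R N) @` K) nu /\
        forall z, @upper R N z -> Pht gamma mu (A z) = Ph gamma nu z) /\
  (* (ii) *)
  (forall (K : set (BPt R N)) (lam : Meas R N),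
      compact (K : set (Pt R N)) -> K `<=` @upper R N -> MK K lam ->
      forall nu : Meas R N,
        (forall E, measurable E -> nu E = lam ((@A R N) @^-1` E)) ->
        (h_capacitary gamma K lam <-> ht_capacitary gamma ((@A R N) @` K) nu)) /\
  (* (iii) *)
  (forall (K : set (BPt R N)) (lam : Meas R N),
      compact (K : set (Pt R N)) -> K `<=` @upper R N ->
      h_capacitary gamma K lam ->
      Cht gamma ((@A R N) @` K) = lam K /\ lam K = Ch gamma K) /\
  (forall (K : set (BPt R N)) (lam : Meas R N),
      compact (K : set (Pt R N)) -> K `<=` @lower R N ->
      ht_capacitary gamma K lam ->
      Ch gamma ((@Ainv R N) @` K) = lam K /\ lam K = Cht gamma K).
Proof.
split; [|split; [|split; [|split]]].
- by move=> K mu K_cpt Kup muK nu nuE; exact: appell_potential_upper.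
- move=> K mu K_cpt Klo muK nu nuE; apply: appell_potential_lower => // E E_meas.
  by rewrite nuE // (image_A_measure (compact_measurable_Pt K_cpt) Klo muK.1).
- by move=> K lam K_cpt Kup lamK nu nuE; exact: h_capacitary_A.
- move=> K lam K_cpt Kup lam_cap; have lamK := lam_cap.1.1.
  pose nu := pushforward_measure lam (@measurable_A R N).
  have nu_cap : ht_capacitary gamma ((@A R N) @` K) nu.
    exact: (h_capacitary_A gamma (nu := nu) K_cpt Kup lamK (fun _ _ => erefl)).1.
  rewrite (Cht_capacitary nu_cap) (Ch_capacitary lam_cap).
  by rewrite (image_A_mass (nu := nu) K_cpt Kup lamK (fun _ _ => erefl)).
- move=> K lam K_cpt Klo lam_cap; have lamK := lam_cap.1.1.
  rewrite (Ch_capacitary (ht_capacitary_Ainv K_cpt Klo lam_cap)) (Cht_capacitary lam_cap).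
  by rewrite (image_Ainv_mass (nu := pushforward_measure lam (@measurable_Ainv R N))
    K_cpt Klo lamK (fun _ _ => erefl)).
Qed.
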